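(* Let $x,y$ be distinct odd primes and let $z$ be an odd positive integer divisible by $y$ and coprime to $x$. If $x$ is not balanced modulo $z$, then $x$ is not balanced modulo $yz$.
   Context: For positive integers $n,m$ with $\gcd(n,m)=1$, $n$ is said to be not balanced modulo $m$ iff there exists an odd Dirichlet character $\chi$ modulo $m$ (i.e. $\chi(-1)=-1$) such that $\chi(n)=1$ and $\sum_{0<k<m/2}\chi(k)\neq0$; otherwise $n$ is balanced modulo $m$. *)

From mathcomp Require Import all_boot all_order all_algebra all_field.
Set Implicit Arguments. Unset Strict Implicit. Unset Printing Implicit Defensive.
Import Order.TTheory GRing.Theory Num.Theory.
Local Open Scope ring_scope.

Definition dirichlet_char (m : nat) (chi : nat -> algC) : Prop :=
  [/\ forall a b : nat, chi (a * b)%N = chi a * chi b,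
      forall a : nat, chi (a + m)%N = chi a,
      forall a : nat, (chi a != 0) = coprime a m
    & chi 1%N = 1].

(* chi(-1) is chi(m-1) since chi is m-periodic. *)
Definition odd_char (m : nat) (chi : nat -> algC) : Prop := chi (m - 1)%N = -1.

Definition half_sum (m : nat) (chi : nat -> algC) : algC :=
  \sum_(1 <= k < m | (k.*2 < m)%N) chi k.

(* n is not balanced modulo m (gcd(n,m) = 1 assumed separately). *)
Definition not_balanced (n m : nat) : Prop :=
  exists chi : nat -> algC,
    [/\ dirichlet_char m chi, odd_char m chi, chi n = 1 & half_sum m chi != 0].

Definition balanced (n m : nat) : Prop := ~ not_balanced n m.

From mathcomp Require Import all_boot all_order all_algebra all_field.
From mathcomp Require Import zify.

Set Implicit Arguments.
Unset Strict Implicit.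
Unset Printing Implicit Defensive.
Import Order.TTheory GRing.Theory Num.Theory.
Local Open Scope ring_scope.

(* A character modulo z is also one modulo yz when every prime of y divides z,
   and it stays odd.  For the half sums, write y = 2q+1 and z = 2t+1, so that
   (yz-1)/2 = qz + t: the range 0 < k < yz/2 consists of q full periods, over
   each of which an odd character sums to 0 (pair k with z-k), followed by a
   copy of the range 0 < k < z/2.  Hence the same character witnesses that x
   is not balanced modulo yz; only y | z and the oddness of y and z are
   used. *)

Section PeriodicSums.

Variables (R : nmodType) (m : nat) (f : nat -> R).
Hypothesis f_periodic : forall a, f (a + m)%N = f a.

Lemma periodic_addM q a : f (a + q * m)%N = f a.
Proof.
elim: q => [|q IHq]; first by rewrite mul0n addn0.
by rewrite mulSn addnCA addnC f_periodic.
Qed.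

Lemma sum_periodic_window a :
  \sum_(a <= k < a + m) f k = \sum_(0 <= k < m) f k.
Proof.
elim: a => [|a <-]; first by rewrite add0n.
case: m f_periodic => [|n] periodic; first by rewrite !addn0 !big_geq.
rewrite addSn big_nat_recr ?addnS ?ltnS ?leq_addr //= -addnS periodic.
by rewrite [RHS]big_ltn ?addnS ?ltnS ?leq_addr // addrC.
Qed.

Lemma sum_periodic_shift a b q :
  \sum_(a + q * m <= k < b + q * m) f k = \sum_(a <= k < b) f k.
Proof. by rewrite big_addn addnK; apply: eq_bigr => k _; rewrite periodic_addM. Qed.

Lemma sum_periodic_periods a q :
  \sum_(a <= k < a + q * m) f k = (\sum_(0 <= k < m) f k) *+ q.
Proof.
elim: q => [|q IHq]; first by rewrite mul0n addn0 big_geq ?mulr0n.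
rewrite mulSnr addnA (big_cat_nat (n := a + q * m)) ?leq_addr //=.
by rewrite IHq sum_periodic_window mulrSr.
Qed.

End PeriodicSums.

Lemma half_sumE (m : nat) (f : nat -> algC) :
  odd m -> half_sum m f = \sum_(1 <= k < (m./2).+1) f k.
Proof.
move=> m_odd; have m_half := odd_double_half m; rewrite m_odd -muln2 in m_half.
rewrite /half_sum [RHS](big_nat_widen 1 _ m); last by lia.
by apply: eq_bigl => k /=; rewrite -muln2; apply/idP/idP; lia.
Qed.

Section DirichletCharacters.

Variables (m : nat) (chi : nat -> algC).
Hypothesis chi_char : dirichlet_char m chi.

Lemma dirichlet_char_periodic a : chi (a + m)%N = chi a.
Proof. by case: chi_char. Qed.

Lemma dirichlet_char_dvd_mul y : (y %| m)%N -> dirichlet_char (y * m) chi.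
Proof.
case: chi_char => chiM _ chi_coprime chi1 y_dvd_m; split=> // [a|a].
  by rewrite periodic_addM //; apply: dirichlet_char_periodic.
rewrite coprimeMr chi_coprime.
by case am: (coprime a m); rewrite ?andbF // (coprime_dvdr y_dvd_m am).
Qed.

Section OddCharacters.

Hypothesis chi_odd : odd_char m chi.

Lemma odd_char_mul k : (0 < k)%N -> odd_char (k * m) chi.
Proof.
move=> k_gt0; rewrite /odd_char -chi_odd.
have -> : (k * m - 1 = (m - 1) + (k - 1) * m)%N by nia.
by rewrite periodic_addM //; apply: dirichlet_char_periodic.
Qed.

(* chi(-k) = chi(-1) chi(k) = - chi(k) *)
Lemma odd_char_reflect k : (0 < k <= m)%N -> chi (m - k)%N = - chi k.
Proof.
case: chi_char => chiM _ _ _ /andP[k_gt0 k_le_m].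
rewrite -mulN1r -chi_odd -chiM.
have -> : ((m - 1) * k = (m - k) + (k - 1) * m)%N by nia.
by rewrite periodic_addM //; apply: dirichlet_char_periodic.
Qed.

Lemma odd_char_sum_period : \sum_(0 <= k < m) chi k = 0.
Proof.
have sumN : \sum_(0 <= k < m) chi k = - \sum_(0 <= k < m) chi k.
  rewrite {1}big_nat_rev -(sum_periodic_window dirichlet_char_periodic 1).
  rewrite add1n big_add1 -sumrN; apply: eq_big_nat => k /andP[_ k_lt_m].
  by rewrite add0n -odd_char_reflect ?subSS //; apply/andP.
by apply/eqP; rewrite -[_ == 0](mulrn_eq0 _ 2) mulr2n {1}sumN addNr.
Qed.

Lemma odd_char_half_sum_mul k :
  odd k -> odd m -> half_sum (k * m) chi = half_sum m chi.
Proof.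
move=> k_odd m_odd; have km_odd : odd (k * m) by rewrite oddM k_odd.
rewrite !half_sumE //.
have -> : ((k * m)./2.+1 = (m./2).+1 + k./2 * m)%N.
  have := odd_double_half k; have := odd_double_half m.
  have := odd_double_half (k * m); rewrite k_odd m_odd km_odd -!muln2; nia.
rewrite (big_cat_nat (n := 1 + k./2 * m)) ?leq_addr //=; last by lia.
have chi_periodic := dirichlet_char_periodic.
rewrite (sum_periodic_periods chi_periodic) (sum_periodic_shift chi_periodic).
by rewrite odd_char_sum_period mul0rn add0r.
Qed.

End OddCharacters.

End DirichletCharacters.

Theorem lemma4p7 (x y z : nat) :
  prime x -> prime y -> odd x -> odd y -> x != y ->
  odd z -> (0 < z)%N -> (y %| z)%N -> coprime x z ->
  not_balanced x z -> not_balanced x (y * z).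
Proof.
move=> _ _ _ y_odd _ z_odd _ y_dvd_z _ [chi [chi_char chi_odd chi_x half_sum_neq0]].
exists chi; split=> //.
- exact: dirichlet_char_dvd_mul.
- exact: odd_char_mul chi_char chi_odd _ (odd_gt0 y_odd).
- by rewrite (odd_char_half_sum_mul chi_char chi_odd y_odd z_odd).
Qed.
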